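(* Let $R$ be a ring, $M$ a nonzero left $R$-module, $\Omega$ an infinite set, and $E=\mathrm{End}_R(\bigoplus_{i\in\Omega}M)$ or $E=\mathrm{End}_R(\prod_{i\in\Omega}M)$. If $U\subseteq E$ generates $E$ as a ring, then there exists a positive integer $n$ such that every element of $E$ is represented by a ring word of length at most $n$ in elements of $U$.
   Context: Rings are unital and associative. Ring words: for a ring $S$ and a subset $U\subseteq S$, an element $r\in S$ is represented by a ring word of length $1$ in elements of $U$ if $r\in U\cup\{0,1,-1\}$; recursively, $r$ is represented by a ring word of length $n$ in elements of $U$ if $r=p+q$ or $r=pq$ for some $p,q\in S$ represented by ring words of lengths $m_1$ and $m_2$ respectively in elements of $U$, with $n=m_1+m_2$. $U$ generates $E$ as a ring means every element of $E$ is represented by some ring word (of some length) in elements of $U$. *)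

From Stdlib Require List.
From mathcomp Require Import all_boot all_algebra.
Set Implicit Arguments. Unset Strict Implicit. Unset Printing Implicit Defensive.
Import GRing.Theory.
Local Open Scope ring_scope.

Definition infinite_type (T : Type) : Prop :=
  forall s : seq T, exists x : T, ~ List.In x s.

Section Words.
Variables (T : Type) (add mul : T -> T -> T) (zero one mone : T).

Inductive ring_word (U : T -> Prop) : nat -> T -> Prop :=
| rw_gen u : U u -> ring_word U 1 u
| rw_zero : ring_word U 1 zero
| rw_one : ring_word U 1 one
| rw_mone : ring_word U 1 mone
| rw_add m1 m2 p q :
    ring_word U m1 p -> ring_word U m2 q -> ring_word U (m1 + m2) (add p q)
| rw_mul m1 m2 p q :
    ring_word U m1 p -> ring_word U m2 q -> ring_word U (m1 + m2) (mul p q).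
End Words.

Section EndRing.
Variables (R : pzRingType) (V : Type) (addV : V -> V -> V) (oppV : V -> V)
  (zeroV : V) (scaleV : R -> V -> V).

Definition is_Rlinear (f : V -> V) : Prop :=
  (forall u v, f (addV u v) = addV (f u) (f v)) /\
  (forall (a : R) u, f (scaleV a u) = scaleV a (f u)).

Definition end_add (f g : V -> V) : V -> V := fun v => addV (f v) (g v).
Definition end_mul (f g : V -> V) : V -> V := fun v => f (g v).
Definition end_zero : V -> V := fun _ => zeroV.
Definition end_one : V -> V := fun v => v.
Definition end_mone : V -> V := fun v => oppV v.

Definition end_word (U : (V -> V) -> Prop) (n : nat) (f : V -> V) : Prop :=
  ring_word end_add end_mul end_zero end_one end_mone U n f.

Definition end_generates (U : (V -> V) -> Prop) : Prop :=
  (forall f, U f -> is_Rlinear f) /\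
  (forall f, is_Rlinear f -> exists n, end_word U n f).

Definition end_bounded_words (U : (V -> V) -> Prop) : Prop :=
  exists n : nat, (0 < n)%N /\
    forall f, is_Rlinear f -> exists m, (m <= n)%N /\ end_word U m f.
End EndRing.

Section Modules.
Variables (R : pzRingType) (M : lmodType R) (Omega : Type).

Definition prod_add (u v : Omega -> M) : Omega -> M := fun i => u i + v i.
Definition prod_opp (u : Omega -> M) : Omega -> M := fun i => - u i.
Definition prod_zero : Omega -> M := fun _ => 0.
Definition prod_scale (a : R) (u : Omega -> M) : Omega -> M := fun i => a *: u i.

Definition fin_supp (u : Omega -> M) : Prop :=
  exists s : seq Omega, forall i, ~ List.In i s -> u i = 0.

Definition dsum := {u : Omega -> M | fin_supp u}.

Lemma fin_supp_add u v : fin_supp u -> fin_supp v -> fin_supp (prod_add u v).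
Proof.
move=> [s Hs] [t Ht]; exists (s ++ t) => i Hi; rewrite /prod_add Hs ?Ht ?addr0 //.
- by move=> H; apply: Hi; apply: List.in_or_app; right.
- by move=> H; apply: Hi; apply: List.in_or_app; left.
Qed.

Lemma fin_supp_opp u : fin_supp u -> fin_supp (prod_opp u).
Proof. by move=> [s Hs]; exists s => i Hi; rewrite /prod_opp Hs ?oppr0. Qed.

Lemma fin_supp_zero : fin_supp prod_zero.
Proof. by exists [::]. Qed.

Lemma fin_supp_scale a u : fin_supp u -> fin_supp (prod_scale a u).
Proof. by move=> [s Hs]; exists s => i Hi; rewrite /prod_scale Hs ?scaler0. Qed.

Definition dsum_add (u v : dsum) : dsum :=
  exist _ (prod_add (proj1_sig u) (proj1_sig v))
    (fin_supp_add (proj2_sig u) (proj2_sig v)).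
Definition dsum_opp (u : dsum) : dsum :=
  exist _ (prod_opp (proj1_sig u)) (fin_supp_opp (proj2_sig u)).
Definition dsum_zero : dsum := exist _ prod_zero fin_supp_zero.
Definition dsum_scale (a : R) (u : dsum) : dsum :=
  exist _ (prod_scale a (proj1_sig u)) (fin_supp_scale a (proj2_sig u)).
End Modules.

Definition prodE_generates (R : pzRingType) (M : lmodType R) (Omega : Type) :=
  @end_generates R (Omega -> M) (@prod_add R M Omega) (@prod_opp R M Omega)
    (@prod_zero R M Omega) (@prod_scale R M Omega).
Definition prodE_bounded (R : pzRingType) (M : lmodType R) (Omega : Type) :=
  @end_bounded_words R (Omega -> M) (@prod_add R M Omega) (@prod_opp R M Omega)
    (@prod_zero R M Omega) (@prod_scale R M Omega).
Definition dsumE_generates (R : pzRingType) (M : lmodType R) (Omega : Type) :=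
  @end_generates R (dsum M Omega) (@dsum_add R M Omega) (@dsum_opp R M Omega)
    (@dsum_zero R M Omega) (@dsum_scale R M Omega).
Definition dsumE_bounded (R : pzRingType) (M : lmodType R) (Omega : Type) :=
  @end_bounded_words R (dsum M Omega) (@dsum_add R M Omega) (@dsum_opp R M Omega)
    (@dsum_zero R M Omega) (@dsum_scale R M Omega).

(* Since [Omega] is infinite there is an injection [g : nat * Omega -> Omega]
   (by Zorn's lemma), so the module [V] (product or direct sum of copies of
   [M]) contains countably many copies of itself, with projections [p k] and
   inclusions [i k], and every sequence [phi] of endomorphisms is realised by
   one block-diagonal endomorphism [D] with [p k * D * i k = phi k].
   If words of bounded length did not suffice, choose [phi k] needing words
   longer than [k + |p k| + |i k|]; a word of length [N] for [D] then gives
   [phi N] a word of length [|p N| + N + |i N|], a contradiction. *)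

From mathcomp Require Import all_boot all_algebra.
From mathcomp Require Import boolp classical_sets.
From Stdlib Require Cantor List.
Set Implicit Arguments. Unset Strict Implicit. Unset Printing Implicit Defensive.
Import GRing.Theory.
Local Open Scope ring_scope.

Section DiagonalArgument.
Variables (R : pzRingType) (V : Type) (addV : V -> V -> V) (oppV : V -> V)
  (zeroV : V) (scaleV : R -> V -> V).

Local Notation linear := (is_Rlinear addV scaleV).
Local Notation word := (end_word addV oppV zeroV).

Lemma end_unbounded_words U : ~ end_bounded_words addV oppV zeroV scaleV U ->
  forall n, exists f, linear f /\ forall m, (m <= n)%N -> ~ word U m f.
Proof.
move=> unbounded n; apply: contrapT => no_f; apply: unbounded.
exists n.+1; split=> // f f_lin; apply: contrapT => no_word.
apply: no_f; exists f; split=> // m le_mn w_f.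
by apply: no_word; exists m; split=> //; apply: leqW.
Qed.

Lemma end_bounded_words_diagonal U (p i : nat -> V -> V) :
  (forall k, linear (p k)) -> (forall k, linear (i k)) ->
  (forall phi : nat -> V -> V, (forall k, linear (phi k)) ->
     exists2 D, linear D & forall k, end_mul (p k) (end_mul D (i k)) = phi k) ->
  end_generates addV oppV zeroV scaleV U ->
  end_bounded_words addV oppV zeroV scaleV U.
Proof.
move=> p_lin i_lin diag [_ U_gen]; apply: contrapT => /end_unbounded_words long.
have [c w_p] := choice (fun k => U_gen _ (p_lin k)).
have [d w_i] := choice (fun k => U_gen _ (i_lin k)).
have [phi phi_long] := choice (fun k => long (k + c k + d k)%N).
have [D D_lin D_phi] := diag phi (fun k => (phi_long k).1).
have [N w_D] := U_gen D D_lin.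
have w_phiN : word U (c N + (N + d N)) (phi N).
  by rewrite -D_phi; apply: rw_mul (w_p N) (rw_mul w_D (w_i N)).
apply: (phi_long N).2 _ _ w_phiN.
by rewrite addnA (addnC (c N)).
Qed.

End DiagonalArgument.

Section InfiniteTimesNat.
Variable T : Type.

Fixpoint list_index (x : T) (s : seq T) : nat :=
  if s is y :: s' then if pselect (y = x) then 0 else (list_index x s').+1
  else 0.

Lemma list_index_lt x s : List.In x s -> (list_index x s < size s)%N.
Proof.
elim: s => //= y s IH x_in; case: pselect => // ne_yx.
by case: x_in => [/ne_yx|/IH].
Qed.

Lemma list_index_inj x y s : List.In x s -> List.In y s ->
  list_index x s = list_index y s -> x = y.
Proof.
elim: s => //= z s IH x_in y_in.
case: pselect => [eq_zx|ne_zx]; case: pselect => [eq_zy|ne_zy] //=.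
- by rewrite -eq_zx -eq_zy.
- by case; apply: IH; [case: x_in => [/ne_zx|] | case: y_in => [/ne_zy|]].
Qed.

Lemma injective_seq_in (P : T -> Prop) :
  (forall s : seq T, exists x, P x /\ ~ List.In x s) ->
  exists c : nat -> T, injective c /\ forall n, P (c n).
Proof.
move=> /choice[next next_P].
pose hist := fix hist n := if n is n'.+1 then next (hist n') :: hist n' else [::].
pose c n := next (hist n).
have c_hist m n : (m < n)%N -> List.In (c m) (hist n).
  elim: n => // n IH; rewrite ltnS leq_eqVlt => /orP[/eqP ->|/IH]; by [left|right].
exists c; split=> [m n eq_c|n]; last exact: (next_P _).1.
have c_new k : ~ List.In (c k) (hist k) := (next_P (hist k)).2.
case: (ltngtP m n) => // [/c_hist|/c_hist]; [rewrite eq_c | rewrite -eq_c];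
  by move/c_new.
Qed.

Definition disjoint_seqs (A : set (nat -> T)) : Prop :=
  (forall e, A e -> injective e) /\
  (forall e e', A e -> A e' -> forall m m', e m = e' m' -> e = e').

Lemma maximal_disjoint_seqs : exists A, disjoint_seqs A /\
  forall B, (A `<` B)%classic -> ~ disjoint_seqs B.
Proof.
apply: Zorn_bigcup => F F_disj F_total; split.
  by move=> e [X FX Xe]; exact: (F_disj X FX).1 _ Xe.
move=> e e' [X FX Xe] [Y FY Ye'].
have [XY|YX] := F_total X Y FX FY.
- exact: (F_disj Y FY).2 e e' (XY _ Xe) Ye'.
- exact: (F_disj X FX).2 e e' Xe (YX _ Ye').
Qed.

(* Otherwise the uncovered points would contain a new injective sequence,
   which could be added to [A]. *)
Lemma maximal_disjoint_seqs_cofinite A : disjoint_seqs A ->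
  (forall B, (A `<` B)%classic -> ~ disjoint_seqs B) ->
  exists s : seq T, forall x, ~ (\bigcup_(e in A) range e)%classic x -> List.In x s.
Proof.
move=> [A_inj A_disj] A_max; apply: contrapT => not_cofinite.
set covered := (\bigcup_(e in A) range e)%classic.
have [c [c_inj c_new]] : exists c : nat -> T, injective c /\
    forall n, ~ covered (c n).
  apply: (@injective_seq_in (fun x => ~ covered x)) => s.
  apply: contrapT => all_covered.
  apply: not_cofinite; exists s => x x_new; apply: contrapT => x_out.
  by apply: all_covered; exists x.
have c_notin : ~ A c by move=> Ac; apply: (c_new 0%N); exists c => //; exists 0%N.
apply: (A_max (A `|` [set c])%classic).
  by split=> [e Ae|/(_ c (or_intror erefl))]; [left|exact: c_notin].
split=> [e [Ae|->] //|e e' [Ae|->] [Ae'|->] m m' eq_em] //; first exact: A_inj.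
- exact: A_disj eq_em.
- by case: (c_new m'); exists e => //; exists m.
- by case: (c_new m); exists e' => //; exists m'.
Qed.

(* Writing [T] as a disjoint union of the ranges of the sequences [e] of a
   maximal family [A], plus a finite list [s] of leftover points, the point
   [(k, e m)] goes to [e (to_nat (k, m + size s))] and the point [(k, x)] with
   [x] leftover goes to [e0 (to_nat (k, list_index x s))] for a fixed
   [e0 \in A]; the second argument of [to_nat] is [>= size s] in the first
   case and [< size s] in the second, so the two cases never collide. *)
Lemma infinite_nat_prod_inj : infinite_type T -> exists g : nat * T -> T, injective g.
Proof.
move=> T_inf.
have [A [[A_inj A_disj] A_max]] := maximal_disjoint_seqs.
have [s s_leftover] := maximal_disjoint_seqs_cofinite (conj A_inj A_disj) A_max.
have [e0 Ae0] : exists e0, A e0.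
  have [x x_notin] := T_inf s; apply: contrapT => A0; apply: x_notin.
  by apply: s_leftover => -[e Ae _]; apply: A0; exists e.
pose label_spec x (o : option ((nat -> T) * nat)) :=
  if o is Some (e, m) then A e /\ e m = x else List.In x s.
have label_ex x : exists o, label_spec x o.
  case: (pselect ((\bigcup_(e in A) range e)%classic x)).
    by move=> [e Ae [m _ <-]]; exists (Some (e, m)).
  by move=> /s_leftover; exists None.
have [lab lab_spec] := choice label_ex.
exists (fun kx => let: (k, x) := kx in if lab x is Some (e, m)
  then e (Cantor.to_nat (k, m + size s)) else e0 (Cantor.to_nat (k, list_index x s))).
have to_nat_inj := can_inj Cantor.cancel_of_to.
move=> [k x] [l y]; move: (lab_spec x) (lab_spec y).
case: (lab x) => [[e m] [Ae <-]|x_in]; case: (lab y) => [[e' m'] [Ae' <-]|y_in] eq_g.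
- have ee' := A_disj _ _ Ae Ae' _ _ eq_g; subst e'.
  by case: (to_nat_inj _ _ (A_inj _ Ae _ _ eq_g)) => -> /addIn ->.
- have ee0 := A_disj _ _ Ae Ae0 _ _ eq_g; subst e0.
  case: (to_nat_inj _ _ (A_inj _ Ae _ _ eq_g)) => _ eq_idx.
  by have := list_index_lt y_in; rewrite -eq_idx ltnNge leq_addl.
- have ee0 := A_disj _ _ Ae0 Ae' _ _ eq_g; subst e0.
  case: (to_nat_inj _ _ (A_inj _ Ae' _ _ eq_g)) => _ eq_idx.
  by have := list_index_lt x_in; rewrite eq_idx ltnNge leq_addl.
- case: (to_nat_inj _ _ (A_inj _ Ae0 _ _ eq_g)) => -> eq_idx.
  by rewrite (list_index_inj x_in y_in eq_idx).
Qed.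

End InfiniteTimesNat.

Lemma in_pmap (A B : Type) (f : A -> option B) s a b :
  List.In a s -> f a = Some b -> List.In b (pmap f s).
Proof.
elim: s => //= y s IH [<- ->|/IH a_in fa]; first by left.
by case: (f y) => /= [c|]; [right|]; exact: a_in.
Qed.

Section Blocks.
Variables (R : pzRingType) (M : lmodType R) (Omega : Type)
  (g : nat * Omega -> Omega).
Hypothesis g_inj : injective g.

Definition unblock (y : Omega) : option (nat * Omega) :=
  if pselect (exists kx, g kx = y) is left y_in then Some (projT1 (cid y_in))
  else None.

Lemma unblock_g kx : unblock (g kx) = Some kx.
Proof.
rewrite /unblock; case: pselect => [y_in|]; last by case; exists kx.
by case: (cid y_in) => lz /= /g_inj ->.
Qed.

Lemma unblock_Some y kx : unblock y = Some kx -> g kx = y.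
Proof. by rewrite /unblock; case: pselect => // y_in [<-]; case: (cid y_in). Qed.

Definition glue (u : nat -> Omega -> M) (y : Omega) : M :=
  if unblock y is Some (l, x) then u l x else 0.

Definition block_proj k (v : Omega -> M) (x : Omega) : M := v (g (k, x)).
Definition block_incl k (v : Omega -> M) : Omega -> M :=
  glue (fun l => if l == k then v else @prod_zero R M Omega).
Definition block_diag (phi : nat -> (Omega -> M) -> Omega -> M) v :=
  glue (fun l => phi l (block_proj l v)).

Lemma block_proj_glue k u : block_proj k (glue u) = u k.
Proof. by apply: funext => x; rewrite /block_proj /glue unblock_g. Qed.

Lemma block_proj_incl k v : block_proj k (block_incl k v) = v.
Proof. by rewrite block_proj_glue eqxx. Qed.

Lemma block_diag_corner phi k :
  end_mul (block_proj k) (end_mul (block_diag phi) (block_incl k)) = phi k.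
Proof.
by apply: funext => v; rewrite /end_mul /block_diag block_proj_glue block_proj_incl.
Qed.

Local Notation linear := (is_Rlinear (@prod_add R M Omega) (@prod_scale R M Omega)).

Lemma block_proj_linear k : linear (block_proj k).
Proof. by []. Qed.

Lemma block_incl_linear k : linear (block_incl k).
Proof.
split=> [u v|a u]; apply: funext => y; rewrite /block_incl /glue /prod_add /prod_scale;
  case: (unblock y) => [[l x]|]; rewrite ?addr0 ?scaler0 //;
  by case: (l == k); rewrite /prod_zero ?addr0 ?scaler0.
Qed.

Lemma block_diag_linear phi : (forall k, linear (phi k)) -> linear (block_diag phi).
Proof.
move=> phi_lin; split=> [u v|a u]; apply: funext => y;
  rewrite /block_diag /glue /prod_add /prod_scale;
  case: (unblock y) => [[l x]|]; rewrite ?addr0 ?scaler0 //.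
- by rewrite (phi_lin l).1.
- by rewrite (phi_lin l).2.
Qed.

Lemma fin_supp_block_proj k u : fin_supp u -> fin_supp (block_proj k u).
Proof.
move=> [s u_supp].
exists (pmap (fun y => if unblock y is Some (l, x) then
  (if l == k then Some x else None) else None) s) => x x_out.
apply: u_supp => gx_in; apply: x_out; apply: in_pmap gx_in _.
by rewrite unblock_g eqxx.
Qed.

Lemma fin_supp_glue u (K : seq nat) : (forall l, fin_supp (u l)) ->
  (forall l, ~ List.In l K -> u l = @prod_zero R M Omega) -> fin_supp (glue u).
Proof.
move=> /choice[S u_supp] u0.
exists (List.flat_map (fun l => List.map (fun x => g (l, x)) (S l)) K) => y y_out.
rewrite /glue; case e_y: (unblock y) => [[l x]|] //.
move: y_out; rewrite -(unblock_Some e_y) => lx_out.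
case: (pselect (List.In l K)) => [l_in|/u0 -> //].
apply: u_supp => x_in; apply: lx_out; apply/List.in_flat_map; exists l.
by split=> //; apply: List.in_map.
Qed.

Lemma fin_supp_block_incl k v : fin_supp v -> fin_supp (block_incl k v).
Proof.
move=> v_fin; apply: (@fin_supp_glue _ [:: k]) => [l|l /= l_out].
  by case: (l == k) => //; exact: fin_supp_zero.
by case: eqP => // e_l; case: l_out; left.
Qed.

Local Notation V := (dsum M Omega).
Local Notation linearS := (is_Rlinear (@dsum_add R M Omega) (@dsum_scale R M Omega)).

Lemma dsum_eq (u v : V) : sval u = sval v -> u = v.
Proof. by case: u v => u u_fin [v v_fin] /= e_uv; apply: eq_exist. Qed.

Lemma dsum_linear0 f : linearS f -> f (dsum_zero M Omega) = dsum_zero M Omega.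
Proof.
have zero_scale v : dsum_scale 0 v = dsum_zero M Omega.
  by apply: dsum_eq; apply: funext => x; rewrite /= /prod_scale scale0r.
by move=> f_lin; rewrite -(zero_scale (dsum_zero M Omega)) f_lin.2 zero_scale.
Qed.

Definition dsum_lift (F : (Omega -> M) -> Omega -> M)
  (F_fin : forall u, fin_supp u -> fin_supp (F u)) (v : V) : V :=
  exist _ (F (sval v)) (F_fin _ (svalP v)).

Lemma dsum_lift_linear F F_fin : linear F -> linearS (@dsum_lift F F_fin).
Proof. by move=> [F_add F_scale]; split=> *; apply: dsum_eq; rewrite /= ?F_add ?F_scale. Qed.

Definition dsum_block_proj k := dsum_lift (fin_supp_block_proj k).
Definition dsum_block_incl k := dsum_lift (fin_supp_block_incl k).

Lemma dsum_block_proj_linear k : linearS (dsum_block_proj k).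
Proof. exact: dsum_lift_linear (block_proj_linear k). Qed.

Lemma dsum_block_incl_linear k : linearS (dsum_block_incl k).
Proof. exact: dsum_lift_linear (block_incl_linear k). Qed.

Lemma dsum_block_proj_incl k v : dsum_block_proj k (dsum_block_incl k v) = v.
Proof. by apply: dsum_eq; rewrite /= block_proj_incl. Qed.

Section DsumDiag.
Variables (phi : nat -> V -> V) (phi_lin : forall k, linearS (phi k)).

Lemma fin_supp_dsum_diag v :
  fin_supp (glue (fun l => sval (phi l (dsum_block_proj l v)))).
Proof.
have [s v_supp] := svalP v.
apply: (@fin_supp_glue _ (pmap (fun y => omap fst (unblock y)) s)) => [l|l l_out].
  exact: svalP (phi l _).
suff -> : dsum_block_proj l v = dsum_zero M Omega by rewrite dsum_linear0.
apply: dsum_eq; apply: funext => x; apply: v_supp => lx_in; apply: l_out.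
by apply: in_pmap lx_in _; rewrite unblock_g.
Qed.

Definition dsum_diag (v : V) : V := exist _ _ (fin_supp_dsum_diag v).

Lemma dsum_diag_linear : linearS dsum_diag.
Proof.
split=> [u v|a u]; apply: dsum_eq; apply: funext => y;
  rewrite /= /glue /prod_add /prod_scale;
  case: (unblock y) => [[l x]|]; rewrite ?addr0 ?scaler0 //.
- by rewrite (dsum_block_proj_linear l).1 (phi_lin l).1.
- by rewrite (dsum_block_proj_linear l).2 (phi_lin l).2.
Qed.

Lemma dsum_diag_corner k :
  end_mul (dsum_block_proj k) (end_mul dsum_diag (dsum_block_incl k)) = phi k.
Proof.
apply: funext => v; apply: dsum_eq.
by rewrite /end_mul /= block_proj_glue dsum_block_proj_incl.
Qed.

End DsumDiag.
End Blocks.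

Theorem theorem5 (R : pzRingType) (M : lmodType R) (Omega : Type)
  (HM : exists m : M, m != 0) (HOmega : infinite_type Omega) :
  (forall U : ((Omega -> M) -> (Omega -> M)) -> Prop,
      prodE_generates U -> prodE_bounded U) /\
  (forall U : ((dsum M Omega) -> (dsum M Omega)) -> Prop,
      dsumE_generates U -> dsumE_bounded U).
Proof.
have [g g_inj] := infinite_nat_prod_inj HOmega.
split=> U.
- apply: (end_bounded_words_diagonal (@block_proj_linear R M Omega g)
    (@block_incl_linear R M Omega g)) => phi phi_lin.
  exists (block_diag g phi); first exact: block_diag_linear.
  exact: block_diag_corner.
- apply: (end_bounded_words_diagonal (dsum_block_proj_linear M g_inj)
    (@dsum_block_incl_linear R M Omega g)) => phi phi_lin.
  exists (dsum_diag g_inj phi_lin); first exact: dsum_diag_linear.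
  exact: dsum_diag_corner.
Qed.
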